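(* For a positive integer $d$, let $s(d)$ be the number of positive integers $e<d$ such that $e\mid d$ and $(e+1)\mid(d+1)$. Let $S(N)=\sum_{d=1}^N s(d)$. Then $$S(N) = N + O(N^{1/2}) \quad\text{as } N\to\infty,$$ and $\sup_{d\ge1} s(d) = \infty$.
   Context: Here $s(d)$ is the number of ''neat Sylvester-type'' canonical forms of degree $d$. These are representations of a general binary $d$-ic as a sum of $r$ forms of degree $e$ raised to the power $d/e$, where $r(e+1)=d+1$ and $e<d$. *)

From mathcomp Require Import all_boot all_order all_algebra.
Set Implicit Arguments. Unset Strict Implicit. Unset Printing Implicit Defensive.

Definition s (d : nat) : nat :=
  #|[set e : 'I_d | (0 < e)%N && (e %| d)%N && (e.+1 %| d.+1)%N]|.

Definition Ssum (N : nat) : nat := (\sum_(1 <= d < N.+1) s d)%N.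

From mathcomp Require Import all_boot.
From Stdlib Require Import Reals.
From mathcomp Require Import zify.
From Stdlib Require Import Lra Psatz.
(* Restore ssrnat notations (notably m ^ n) shadowed by Reals. *)
Import ssrnat.

(* For 0 < e < d, the conditions e | d and (e+1) | (d+1) together say exactly
   that e(e+1) | d - e (e and e+1 are coprime, and d+1 = (d-e) + (e+1)).
   Hence s(d) counts the e in [1, d) with e(e+1) | d - e, and exchanging the
   order of summation gives the exact formula
       S(N) = sum_{e=1}^{N} floor((N - e) / (e(e+1))).
   Each summand lies between N/(e(e+1)) - 2 and N/(e(e+1)), and the sum of
   N/(e(e+1)) over e <= K telescopes to N - N/(K+1).  Truncating at
   K = floor(sqrt N) gives N - 3 sqrt N <= S(N) <= N.
   For unboundedness, if j | m with 0 < j < m then e = 2^j - 1 is counted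
   by s(2^m - 1); choosing m = (M+1)! gives M such e, so s(2^m - 1) >= M. *)

Lemma dvd_pair_iff (e d : nat) : 0 < e -> e < d ->
  (e %| d) && (e.+1 %| d.+1) = (e * e.+1 %| d - e).
Proof.
move=> e_gt0 lt_ed.
rewrite (Gauss_dvd _ (coprimenS e)).
have -> : d = (d - e) + e by rewrite subnK // ltnW.
have -> : (d - e + e).+1 = (d - e + e) - e + e.+1 by rewrite addnK addnS.
by rewrite addnK dvdn_addl // dvdn_addl.
Qed.

Lemma s_as_sum (d : nat) : s d = \sum_(1 <= e < d) (e * e.+1 %| d - e).
Proof.
case: d => [|d]; first by rewrite /s cardsE -sum1_card big_ord0 big_geq.
rewrite /s cardsE -sum1_card big_mkcond /=.
rewrite -(big_mkord xpredT
  (fun e => if (0 < e) && (e %| d.+1) && (e.+1 %| d.+2) then 1 else 0)).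
rewrite big_ltn //= add0n.
apply: eq_big_nat => e /andP [e_gt0 lt_ed].
by rewrite -andbA e_gt0 /= dvd_pair_iff //; case: (_ %| _).
Qed.

Definition floor_sum (N K : nat) : nat :=
  \sum_(1 <= e < K.+1) (N - e) %/ (e * e.+1).

Lemma floor_sumS (N K : nat) :
  floor_sum N K.+1 = floor_sum N K + (N - K.+1) %/ (K.+1 * K.+2).
Proof. by rewrite /floor_sum big_nat_recr. Qed.

Lemma floor_sum_mono (N K L : nat) : K <= L -> floor_sum N K <= floor_sum N L.
Proof.
move=> le_KL.
by rewrite /floor_sum (@big_cat_nat _ _ _ K.+1 1 L.+1) //= leq_addr.
Qed.

(* Exchanging summations: S(N) counts multiples of e(e+1) in [1, N - e]. *)
Lemma Ssum_floor_sum (N : nat) : Ssum N = floor_sum N N.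
Proof.
elim: N => [|N IH]; first by rewrite /Ssum /floor_sum !big_geq.
rewrite /Ssum big_nat_recr //= -/(Ssum N) IH s_as_sum /floor_sum.
rewrite [in RHS]big_nat_recr //= subnn div0n addn0 -big_split /=.
apply: eq_big_nat => e /andP [e_gt0 le_eN].
rewrite subSn // divnS ?muln_gt0 ?e_gt0 //; exact: addnC.
Qed.

(* A proper divisor j of m yields the element e = 2^j - 1 counted by
   s(2^m - 1): e | 2^m - 1 since j | m, and e + 1 = 2^j | 2^m. *)
Lemma mersenne_counted (j m : nat) : 0 < j < m -> j %| m ->
  [&& 0 < (2 ^ j).-1, (2 ^ j).-1 < (2 ^ m).-1,
      (2 ^ j).-1 %| (2 ^ m).-1 & ((2 ^ j).-1).+1 %| ((2 ^ m).-1).+1].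
Proof.
move=> /andP [j_gt0 lt_jm] dvd_jm.
have pow_gt0 n : 0 < 2 ^ n by rewrite expn_gt0.
have lt_pow : 2 ^ j < 2 ^ m by rewrite ltn_exp2l.
have gt1_pow : 1 < 2 ^ j by rewrite -{1}(expn0 2) ltn_exp2l.
rewrite !prednK ?pow_gt0 //.
rewrite (dvdn_exp2l 2 (ltnW lt_jm)) andbT.
have [k def_m] := dvdnP dvd_jm.
have dvd_pred : (2 ^ j).-1 %| (2 ^ m).-1.
  by rewrite def_m mulnC expnM dvdn_pred_predX.
rewrite dvd_pred andbT.
apply/andP; split; lia.
Qed.

(* If m > M is divisible by each of 1, ..., M then s(2^m - 1) >= M: the
   elements 2^j - 1 for j = 1, ..., M are distinct and all counted. *)
Lemma s_mersenne_ge (M m : nat) :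
  (forall j, 0 < j <= M -> j %| m) -> M < m -> M <= s (2 ^ m).-1.
Proof.
move=> dvd_m lt_Mm.
have range (i : 'I_M) : 0 < i.+1 < m by exact: leq_ltn_trans (ltn_ord i) lt_Mm.
have counted (i : 'I_M) := mersenne_counted i.+1 m (range i) (dvd_m i.+1 (ltn_ord i)).
have lt_f (i : 'I_M) : (2 ^ i.+1).-1 < (2 ^ m).-1 by case/and4P: (counted i).
pose f (i : 'I_M) : 'I_(2 ^ m).-1 := Ordinal (lt_f i).
have f_inj : injective f.
  move=> i i' /(congr1 (fun x : 'I_ _ => (val x).+1)) /=.
  rewrite !prednK ?expn_gt0 // => /eqP; rewrite eqn_exp2l // => /eqP [].
  exact: val_inj.
rewrite /s -{1}(card_ord M) -(card_imset predT f_inj).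
apply/subset_leq_card/subsetP => _ /imsetP [i _ ->].
by rewrite inE /=; case/and4P: (counted i) => -> _ -> ->.
Qed.

Open Scope R_scope.

Lemma div_INR_bounds (n m : nat) : (0 < m)%N ->
  INR (n %/ m)%N <= INR n / INR m < INR (n %/ m)%N + 1.
Proof.
move=> m_gt0.
have m_pos : 0 < INR m by apply: (lt_INR 0); apply/ltP.
have lo : INR (n %/ m)%N * INR m <= INR n.
  by rewrite -mult_INR; apply: le_INR; apply/leP; exact: leq_divM.
have hi : INR n < (INR (n %/ m)%N + 1) * INR m.
  by rewrite -S_INR -mult_INR; apply: lt_INR; apply/ltP; exact: ltn_ceil.
split.
- by apply: (Rmult_le_reg_r (INR m)) => //; field_simplify; lra.
- by apply: (Rmult_lt_reg_r (INR m)) => //; field_simplify; lra.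
Qed.

Lemma INR_subn_ge (n m : nat) : INR n - INR m <= INR (n - m)%N.
Proof.
case: (leqP m n) => [le_mn | lt_nm].
- by rewrite minus_INR; [lra | apply/leP].
- have /ltP/lt_INR := lt_nm; have := pos_INR (n - m)%N; lra.
Qed.

Lemma summand_bounds (N e : nat) : (0 < e)%N ->
  let t := INR N / (INR e * (INR e + 1)) in
  t - 2 <= INR ((N - e) %/ (e * e.+1))%N <= t.
Proof.
move=> e_gt0 t.
have e_ge1 : 1 <= INR e by apply: (le_INR 1); apply/leP.
have den_gt0 : (0 < e * e.+1)%N by rewrite muln_gt0 e_gt0.
have := div_INR_bounds (N - e) (e * e.+1) den_gt0.
rewrite mult_INR S_INR.
set D := INR e * (INR e + 1); set q := INR _; set r := INR (N - e)%N.
move=> [q_le q_gt].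
have D_pos : 0 < D by rewrite /D; nra.
have r_le : r / D <= t.
  apply: Rmult_le_compat_r; first by apply: Rlt_le; apply: Rinv_0_lt_compat.
  by apply: le_INR; apply/leP; exact: leq_subr.
have r_ge : (INR N - INR e) / D <= r / D.
  apply: Rmult_le_compat_r; first by apply: Rlt_le; apply: Rinv_0_lt_compat.
  exact: INR_subn_ge.
have shift : (INR N - INR e) / D = t - 1 / (INR e + 1) by rewrite /t /D; field; lra.
have inv_le1 : 1 / (INR e + 1) <= 1.
  by apply: (Rmult_le_reg_r (INR e + 1)); [lra | field_simplify; lra].
split; lra.
Qed.

(* Telescoping 1/(e(e+1)) = 1/e - 1/(e+1): the partial sums up to K are
   N - N/(K+1), up to an error of at most 2 per summand. *)
Lemma floor_sum_bounds (N K : nat) :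
  INR N - INR N / (INR K + 1) - 2 * INR K <= INR (floor_sum N K)
  <= INR N - INR N / (INR K + 1).
Proof.
elim: K => [|K IH]; first by rewrite /floor_sum big_geq //=; split; lra.
have K_ge0 := pos_INR K.
have := summand_bounds N K.+1 (ltn0Sn K).
rewrite floor_sumS plus_INR !S_INR.
have telescope : INR N / (INR K + 1) - INR N / (INR K + 1 + 1)
                 = INR N / ((INR K + 1) * (INR K + 1 + 1)) by field; lra.
lra.
Qed.

Lemma isqrt_bounds (N : nat) :
  INR (Nat.sqrt N) <= sqrt (INR N) /\
  INR N / (INR (Nat.sqrt N) + 1) <= sqrt (INR N).
Proof.
have [/le_INR sq_le /lt_INR sq_gt] := Nat.sqrt_spec' N.
rewrite !mult_INR S_INR in sq_le sq_gt.
have K_ge0 := pos_INR (Nat.sqrt N).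
have t_ge0 := sqrt_pos (INR N).
have t_sq := sqrt_sqrt (INR N) (pos_INR N).
set K := INR _ in sq_le sq_gt K_ge0 *; set t := sqrt _ in t_ge0 t_sq *.
have K_le : K <= t by nra.
have t_le : t <= K + 1 by nra.
split => //.
apply: (Rmult_le_reg_r (K + 1)); first lra.
by field_simplify; nra.
Qed.

Theorem theorem4p5 :
  (exists (C : R) (N0 : nat), forall N : nat, (N0 <= N)%N ->
      (Rabs (INR (Ssum N) - INR N) <= C * sqrt (INR N))%R)
  /\ (forall M : nat, exists d : nat, (1 <= d)%N /\ (M <= s d)%N).
Proof.
split.
- exists 3, 0%N => N _.
  rewrite Ssum_floor_sum.
  have [_ upper] := floor_sum_bounds N N.
  have [lower _] := floor_sum_bounds N (Nat.sqrt N).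
  have [K_le tail_le] := isqrt_bounds N.
  have truncate : INR (floor_sum N (Nat.sqrt N)) <= INR (floor_sum N N).
    by apply/le_INR/leP/floor_sum_mono/leP; exact: Nat.sqrt_le_lin.
  have tail_ge0 : 0 <= INR N / (INR N + 1).
    by apply: Rmult_le_pos; [|apply: Rlt_le; apply: Rinv_0_lt_compat];
       have := pos_INR N; lra.
  apply: Rabs_le; split; lra.
- move=> M; set m := (M.+1)`!.
  exists (2 ^ m).-1; split.
  + by rewrite -ltnS prednK ?expn_gt0 // -{1}(expn0 2) ltn_exp2l ?fact_gt0.
  + apply: s_mersenne_ge; last exact: leq_trans (ltnSn M) (fact_geq M.+1).
    by move=> j /andP [j_gt0 le_jM]; rewrite dvdn_fact // j_gt0 ltnW.
Qed.
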